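(* Let $N\ge5$, $N\not\equiv1\pmod3$. For a generic twisted $(N,1)$ spiral, the shift map satisfies $\mathcal S(A_i)=A_{i+1}$ for $i=0,1,\dots,N-2$; that is, $\widehat c_{i+1}+\widehat a_{i+1}\widehat b_i=c_{i+1}+a_{i+1}b_i$ for these $i$.
   Context: Points lie in $\mathbb{RP}^2$; $M\in PSL(3,\mathbb R)$ is identified with a representing matrix in $SL(3,\mathbb R)$. For a bi-infinite sequence $(p_k)_{k\in\mathbb Z}$ in $\mathbb{RP}^2$, $T(p_k)=\overline{p_{k-1}p_{k+1}}\cap\overline{p_kp_{k+2}}$. A twisted $(N,1)$ pentagram spiral with monodromy $M$ is a bi-infinite sequence $(p_k)$ with $p_{N+k}=M\cdot T(p_{k-1})$ for all $k$, such that $p_{N+1}$ lies on the segment joining $p_N$ and $M\cdot p_1$; its seed is $\{p_1,\dots,p_N;p_{N+1}\}$; ''generic'' means all determinants and denominators appearing are nonzero. For vectors define $T(V_i)=(V_{i-1}\times V_{i+1})\times(V_i\times V_{i+2})$, $\overline T(V_i)=c_{i+1}(V_i\times V_{i+1})\times(V_{i-2}\times V_{i-1})$, $c_i=\det(V_{i+1},V_{i+2},V_{i+3})/\det(V_i,V_{i+1},V_{i+2})$. The normalized lift is the unique sequence $V_k$ with $[V_k]=p_k$, $V_{N+i}=MT(V_{i-1})$ and $V_{-i}=M^{-1}\overline T(V_{N-i+1})$ for $i\ge1$, and $\det(V_i,V_{i+1},V_{i+2})=1$ for $i=0,\dots,N$. Invariants: $V_{i+3}=a_iV_{i+2}+b_iV_{i+1}+c_iV_i$;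 $A_i=c_i+a_ib_{i-1}$. The shift map $\mathcal S$ sends the spiral to the same sequence with seed $\{p_2,\dots,p_{N+1};p_{N+2}\}$, whose normalized lift $(\widehat V_i)$ satisfies $[\widehat V_i]=p_i$, $\det(\widehat V_i,\widehat V_{i+1},\widehat V_{i+2})=1$ for $i=1,\dots,N+1$, $\widehat V_{N+1+i}=MT(\widehat V_i)$, $\widehat V_{1-i}=M^{-1}\overline T(\widehat V_{N+2-i})$ for $i\ge1$; hatted invariants are defined by $\widehat V_{i+3}=\widehat a_i\widehat V_{i+2}+\widehat b_i\widehat V_{i+1}+\widehat c_i\widehat V_i$. In coordinates $\mathcal S(a_i)=\widehat a_{i+1}$, $\mathcal S(b_i)=\widehat b_{i+1}$, $\mathcal S(c_i)=\widehat c_{i+1}$. *)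

From Stdlib Require Import Reals ZArith Lra.
Open Scope R_scope.

Record vec := mkV { vx : R; vy : R; vz : R }.

Definition vzero : vec := mkV 0 0 0.
Definition vadd (u v : vec) : vec := mkV (vx u + vx v) (vy u + vy v) (vz u + vz v).
Definition vscale (l : R) (u : vec) : vec := mkV (l * vx u) (l * vy u) (l * vz u).
Definition cross (u v : vec) : vec :=
  mkV (vy u * vz v - vz u * vy v)
      (vz u * vx v - vx u * vz v)
      (vx u * vy v - vy u * vx v).
Definition dot (u v : vec) : R := vx u * vx v + vy u * vy v + vz u * vz v.
Definition det3 (u v w : vec) : R := dot u (cross v w).

Record mat := mkM { m11 : R; m12 : R; m13 : R;
                    m21 : R; m22 : R; m23 : R;
                    m31 : R; m32 : R; m33 : R }.
Definition mapply (M : mat) (u : vec) : vec :=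
  mkV (m11 M * vx u + m12 M * vy u + m13 M * vz u)
      (m21 M * vx u + m22 M * vy u + m23 M * vz u)
      (m31 M * vx u + m32 M * vy u + m33 M * vz u).
Definition mdet (M : mat) : R :=
  m11 M * (m22 M * m33 M - m23 M * m32 M)
  - m12 M * (m21 M * m33 M - m23 M * m31 M)
  + m13 M * (m21 M * m32 M - m22 M * m31 M).

(* A point of RP^2 is represented by a nonzero vector; [u] = [v] iff proportional. *)
Definition proj_eq (u v : vec) : Prop := exists l : R, l <> 0 /\ u = vscale l v.

Close Scope R_scope.
Open Scope Z_scope.

Definition Tmap (V : Z -> vec) (i : Z) : vec :=
  cross (cross (V (i - 1)) (V (i + 1))) (cross (V i) (V (i + 2))).

Definition cinv (V : Z -> vec) (i : Z) : R :=
  Rdiv (det3 (V (i + 1)) (V (i + 2)) (V (i + 3))) (det3 (V i) (V (i + 1)) (V (i + 2))).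

Definition Tbar (V : Z -> vec) (i : Z) : vec :=
  vscale (cinv V (i + 1)) (cross (cross (V i) (V (i + 1))) (cross (V (i - 2)) (V (i - 1)))).

Definition twisted_spiral (N : Z) (M : mat) (p : Z -> vec) : Prop :=
  (forall k, p k <> vzero) /\
  (forall k, proj_eq (p (N + k)) (mapply M (Tmap p (k - 1)))) /\
  (exists s t : R, Rle 0 s /\ Rle 0 t /\
     proj_eq (p (N + 1)) (vadd (vscale s (p N)) (vscale t (mapply M (p 1))))).

Definition generic_spiral (p : Z -> vec) : Prop :=
  forall i, det3 (p i) (p (i + 1)) (p (i + 2)) <> 0%R.

Definition normalized_lift (N : Z) (M : mat) (p V : Z -> vec) : Prop :=
  (forall k, proj_eq (V k) (p k)) /\
  (forall i, 1 <= i -> V (N + i) = mapply M (Tmap V (i - 1))) /\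
  (forall i, 1 <= i -> mapply M (V (- i)) = Tbar V (N - i + 1)) /\
  (forall i, 0 <= i <= N -> det3 (V i) (V (i + 1)) (V (i + 2)) = 1%R).

Definition shifted_normalized_lift (N : Z) (M : mat) (p W : Z -> vec) : Prop :=
  (forall k, proj_eq (W k) (p k)) /\
  (forall i, 1 <= i <= N + 1 -> det3 (W i) (W (i + 1)) (W (i + 2)) = 1%R) /\
  (forall i, 1 <= i -> W (N + 1 + i) = mapply M (Tmap W i)) /\
  (forall i, 1 <= i -> mapply M (W (1 - i)) = Tbar W (N + 2 - i)).

Definition invariants (V : Z -> vec) (a b c : Z -> R) : Prop :=
  forall i, V (i + 3) = vadd (vscale (a i) (V (i + 2)))
                        (vadd (vscale (b i) (V (i + 1))) (vscale (c i) (V i))).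

From Stdlib Require Import Reals ZArith Lia Lra.
Open Scope R_scope.

(* The normalized lifts of a spiral and of its shift represent the same points,
   so W_k = l_k V_k for scalars l_k.  Rescaling a lift changes the invariants by
   a_k -> a_k l_{k+3}/l_{k+2}, b_k -> b_k l_{k+3}/l_{k+1}, c_k -> c_k l_{k+3}/l_k,
   hence A_{k+1} = c_{k+1} + a_{k+1} b_k is multiplied by l_{k+4}/l_{k+1}.  Both
   lifts have unit determinants on a common window, which forces
   l_{k+1} l_{k+2} l_{k+3} = 1 = l_{k+2} l_{k+3} l_{k+4}, so this factor is 1. *)

Lemma det3_vscale (l m n : R) (x y z : vec) :
  det3 (vscale l x) (vscale m y) (vscale n z) = l * m * n * det3 x y z.
Proof. destruct x, y, z; unfold det3, dot, cross, vscale; simpl; ring. Qed.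

Lemma det3_lin_comb (x y z : vec) (a b c : R) :
  let w := vadd (vscale a z) (vadd (vscale b y) (vscale c x)) in
  det3 x y w = a * det3 x y z /\ det3 x w z = b * det3 x y z /\
  det3 w y z = c * det3 x y z.
Proof.
  destruct x, y, z; unfold det3, dot, cross, vadd, vscale; simpl.
  repeat split; ring.
Qed.

Lemma lin_comb_coeffs_unique (x y z : vec) (a b c a' b' c' : R) :
  det3 x y z <> 0 ->
  vadd (vscale a z) (vadd (vscale b y) (vscale c x)) =
  vadd (vscale a' z) (vadd (vscale b' y) (vscale c' x)) ->
  a = a' /\ b = b' /\ c = c'.
Proof.
  intros Hdet Hw.
  destruct (det3_lin_comb x y z a b c) as [Ha [Hb Hc]].
  destruct (det3_lin_comb x y z a' b' c') as [Ha' [Hb' Hc']].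
  cbv zeta in *; rewrite Hw, ?Ha', ?Hb', ?Hc' in *.
  repeat split; apply (Rmult_eq_reg_r (det3 x y z)); congruence.
Qed.

(* The scale factor of u against v; meaningful only when u is a multiple of v <> 0. *)
Definition ratio (u v : vec) : R := dot u v / dot v v.

Lemma dot_self_neq0 (v : vec) : v <> vzero -> dot v v <> 0.
Proof.
  intros Hv Hdot; apply Hv; destruct v as [x y z]; unfold dot in Hdot; simpl in Hdot.
  assert (x = 0) by nra; assert (y = 0) by nra; assert (z = 0) by nra.
  subst; reflexivity.
Qed.

Lemma vscale_ratio (u v : vec) (l : R) :
  v <> vzero -> u = vscale l v -> u = vscale (ratio u v) v.
Proof.
  intros Hv ->; pose proof (dot_self_neq0 v Hv) as Hd.
  replace (ratio (vscale l v) v) with l; [reflexivity|].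
  unfold ratio; destruct v; unfold dot, vscale in *; simpl in *; field; exact Hd.
Qed.

Lemma vscale_neq0 (l : R) (w : vec) : l <> 0 -> w <> vzero -> vscale l w <> vzero.
Proof.
  intros Hl Hw H0; apply Hw; destruct w as [x y z]; unfold vscale, vzero in *.
  injection H0; intros Hz Hy Hx.
  apply Rmult_integral in Hx, Hy, Hz; f_equal; tauto.
Qed.

Lemma proj_eq_common_ratio (u v w : vec) :
  w <> vzero -> proj_eq u w -> proj_eq v w -> u = vscale (ratio u v) v.
Proof.
  intros Hw [l [_ Hu]] [m [Hm Hv]].
  apply vscale_ratio with (l := l / m).
  - rewrite Hv; exact (vscale_neq0 m w Hm Hw).
  - rewrite Hu, Hv; destruct w; unfold vscale; simpl; f_equal; field; exact Hm.
Qed.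

Section Rescaling.

Variables (V W : Z -> vec) (l a b c ah bh ch : Z -> R).
Hypothesis W_rescale : forall k, W k = vscale (l k) (V k).
Hypothesis V_inv : invariants V a b c.
Hypothesis W_inv : invariants W ah bh ch.

Lemma invariants_rescale (k : Z) :
  det3 (V k) (V (k + 1)) (V (k + 2)) <> 0 ->
  ah k * l (k + 2) = l (k + 3) * a k /\ bh k * l (k + 1) = l (k + 3) * b k /\
  ch k * l k = l (k + 3) * c k.
Proof.
  intros Hdet; apply lin_comb_coeffs_unique with (1 := Hdet).
  transitivity (W (k + 3)).
  - rewrite W_inv, !W_rescale; destruct (V k), (V (k + 1)), (V (k + 2)).
    unfold vadd, vscale; simpl; f_equal; ring.
  - rewrite W_rescale, V_inv; destruct (V k), (V (k + 1)), (V (k + 2)).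
    unfold vadd, vscale; simpl; f_equal; ring.
Qed.

Lemma rescale_unit_det (k : Z) :
  det3 (V k) (V (k + 1)) (V (k + 2)) = 1 ->
  det3 (W k) (W (k + 1)) (W (k + 2)) = 1 ->
  l k * l (k + 1) * l (k + 2) = 1.
Proof.
  intros HV HW; rewrite !W_rescale, det3_vscale, HV, Rmult_1_r in HW; exact HW.
Qed.

Ltac normalize_indices := rewrite <- ?Z.add_assoc in *; simpl Z.add in *.

Lemma rescale_period3 (k : Z) :
  det3 (V k) (V (k + 1)) (V (k + 2)) = 1 ->
  det3 (V (k + 1)) (V (k + 2)) (V (k + 3)) = 1 ->
  det3 (W k) (W (k + 1)) (W (k + 2)) = 1 ->
  det3 (W (k + 1)) (W (k + 2)) (W (k + 3)) = 1 ->
  l (k + 3) = l k.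
Proof.
  intros HV0 HV1 HW0 HW1.
  pose proof (rescale_unit_det k HV0 HW0) as E0.
  pose proof (rescale_unit_det (k + 1)) as E1; normalize_indices.
  specialize (E1 HV1 HW1).
  apply (Rmult_eq_reg_l (l (k + 1) * l (k + 2))); [lra | intros H0; rewrite H0 in E1; lra].
Qed.

Lemma A_invariant_rescale (k : Z) :
  (forall j, (k <= j <= k + 2)%Z -> det3 (V j) (V (j + 1)) (V (j + 2)) = 1) ->
  (forall j, (k + 1 <= j <= k + 2)%Z -> det3 (W j) (W (j + 1)) (W (j + 2)) = 1) ->
  ch (k + 1) + ah (k + 1) * bh k = c (k + 1) + a (k + 1) * b k.
Proof.
  intros HV HW.
  assert (HV0 := HV k ltac:(lia)).
  assert (HV1 := HV (k + 1)%Z ltac:(lia)); assert (HV2 := HV (k + 2)%Z ltac:(lia)).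
  assert (HW1 := HW (k + 1)%Z ltac:(lia)); assert (HW2 := HW (k + 2)%Z ltac:(lia)).
  assert (Hb := invariants_rescale k).
  assert (Hac := invariants_rescale (k + 1)).
  assert (Hl := rescale_unit_det (k + 1)).
  assert (Hper := rescale_period3 (k + 1)).
  normalize_indices.
  destruct Hb as [_ [Hb _]]; [lra|].
  destruct Hac as [Ha [_ Hc]]; [lra|].
  specialize (Hl HV1 HW1).
  rewrite (Hper HV1 HV2 HW1 HW2) in Ha, Hc.
  assert (Hl1 : l (k + 1) <> 0) by (intros H0; rewrite H0 in Hl; lra).
  assert (Hl3 : l (k + 3) <> 0) by (intros H0; rewrite H0 in Hl; lra).
  apply (Rmult_eq_reg_r (l (k + 1) * l (k + 3))); [| apply Rmult_integral_contrapositive; tauto].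
  replace ((ch (k + 1) + ah (k + 1) * bh k) * (l (k + 1) * l (k + 3)))
    with (ch (k + 1) * l (k + 1) * l (k + 3) + (ah (k + 1) * l (k + 3)) * (bh k * l (k + 1)))
    by ring.
  rewrite Ha, Hb, Hc; ring.
Qed.

End Rescaling.

Theorem mainTheorem13
  (N : Z) (M : mat) (p V W : Z -> vec) (a b c ah bh ch : Z -> R) :
  (5 <= N)%Z -> (N mod 3 <> 1)%Z ->
  mdet M = 1 ->
  twisted_spiral N M p ->
  generic_spiral p ->
  normalized_lift N M p V ->
  shifted_normalized_lift N M p W ->
  invariants V a b c ->
  invariants W ah bh ch ->
  forall i : Z, (0 <= i <= N - 2)%Z ->
    ch (i + 1)%Z + ah (i + 1)%Z * bh i = c (i + 1)%Z + a (i + 1)%Z * b i.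
Proof.
  intros _ _ _ [p_neq0 _] _ [V_p [_ [_ V_det]]] [W_p [W_det _]] V_inv W_inv i Hi.
  apply (A_invariant_rescale V W (fun k => ratio (W k) (V k))); try assumption.
  - intros k; exact (proj_eq_common_ratio (W k) (V k) (p k) (p_neq0 k) (W_p k) (V_p k)).
  - intros j Hj; apply V_det; lia.
  - intros j Hj; apply W_det; lia.
Qed.
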